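(* Let $X$ be a Hausdorff locally compact space and $\sigma\colon\mathrm{Dom}(\sigma)\to\mathrm{Ran}(\sigma)$ a local homeomorphism between open subsets of $X$, with Deaconu–Renault groupoid $\mathcal{G}_\sigma$. Then $A(\sigma)$ and $P_0(\sigma)$ are $\mathcal{G}_\sigma$-invariant subsets of $X$, and $A(\sigma)\cup P_0(\sigma)$ equals the set of points $x\in X$ such that $\mathrm{Iso}((\mathcal{G}_\sigma)_{\overline{[x]}})^\circ_x=(\mathcal{G}_\sigma)^x_x$.
   Context: $\sigma^0=\mathrm{id}_X$ and $\sigma^n$ is the $n$-fold composition with natural domain $\mathrm{Dom}(\sigma^n)$. $\mathcal{G}_\sigma=\{(x,m-n,y): m,n\ge0,\ x\in\mathrm{Dom}(\sigma^m),\ y\in\mathrm{Dom}(\sigma^n),\ \sigma^m(x)=\sigma^n(y)\}$ with $r(x,p,y)=x$, $s(x,p,y)=y$, $(x,p,y)(y,q,w)=(x,p+q,w)$, unit space $X$, topology with basis $Z(U,m,n,V)=\{(x,m-n,y): x\in U\cap\mathrm{Dom}(\sigma^m),\ y\in V\cap\mathrm{Dom}(\sigma^n),\ \sigma^m(x)=\sigma^n(y)\}$. The orbit $[x]$ is $\{y:\sigma^m(y)=\sigma^n(x)\text{ for some }m,n\ge0\}$. $A(\sigma)$ is the set of aperiodic points (no $l\ge0,p\ge1$ with $\sigma^{l+p}(x)=\sigma^l(x)$); $P_0(\sigma)$ is the set of periodic points $x$ that are isolated points of $[x]$ (relative topology). For closed invariant $Y\subset X$, $(\mathcal{G}_\sigma)_Y=s^{-1}(Y)$,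 and $\mathrm{Iso}((\mathcal{G}_\sigma)_{\overline{[x]}})^\circ_x$ is the intersection with $(\mathcal{G}_\sigma)^x_x$ of the interior in $(\mathcal{G}_\sigma)_{\overline{[x]}}$ of its isotropy bundle $\{g: s(g)=r(g)\}$. *)

From HB Require Import structures.
From mathcomp Require Import all_boot all_order all_algebra.
From mathcomp Require Import all_classical all_reals all_analysis.
Set Implicit Arguments. Unset Strict Implicit. Unset Printing Implicit Defensive.
Import Order.TTheory GRing.Theory Num.Theory.
Local Open Scope classical_set_scope.

Section DR.
Context {X : topologicalType} (Dom : set X) (sigma : X -> X).

Definition domn (n : nat) : set X :=
  [set x | forall k : nat, (k < n)%N -> Dom (iter k sigma x)].

Definition sigman (n : nat) (x : X) : X := iter n sigma x.

Definition local_homeo_between_open : Prop :=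
  open Dom /\ open (sigma @` Dom) /\
  forall x, Dom x -> exists U : set X,
    [/\ open U, U x, U `<=` Dom, open (sigma @` U) &
        ({within U, continuous sigma} /\
        {in U &, injective sigma} /\
        exists g : X -> X,
          [/\ {in U, forall y, g (sigma y) = y},
              {in sigma @` U, forall z, sigma (g z) = z},
              g @` (sigma @` U) `<=` U &
              {within sigma @` U, continuous g}])].

(* the Deaconu--Renault groupoid: elements are triples (x, p, y) *)
Definition inG (g : X * int * X) : Prop :=
  exists m n : nat, [/\ g.1.2 = (m%:Z - n%:Z)%R, domn m g.1.1, domn n g.2 &
                        sigman m g.1.1 = sigman n g.2].

Definition rng (g : X * int * X) : X := g.1.1.
Definition src (g : X * int * X) : X := g.2.

Definition Zset (U : set X) (m n : nat) (V : set X) : set (X * int * X) :=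
  [set g | [/\ g.1.2 = (m%:Z - n%:Z)%R, U g.1.1, domn m g.1.1, V g.2 &
               (domn n g.2 /\ sigman m g.1.1 = sigman n g.2)]].

Definition openG (O : set (X * int * X)) : Prop :=
  O `<=` inG /\
  forall g, O g -> exists U m n V,
      [/\ open U, open V, Zset U m n V g & Zset U m n V `<=` O].

Definition reduction (Y : set X) : set (X * int * X) :=
  [set g | inG g /\ Y (src g)].

Definition rel_interiorG (B A : set (X * int * X)) : set (X * int * X) :=
  [set g | B g /\ exists O, [/\ openG O, O g & O `&` B `<=` A]].

Definition isotropy (B : set (X * int * X)) : set (X * int * X) :=
  [set g | B g /\ src g = rng g].

Definition isoG_at (x : X) : set (X * int * X) :=
  [set g | inG g /\ rng g = x /\ src g = x].

Definition orbit (x : X) : set X :=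
  [set y | exists m n : nat, [/\ domn m y, domn n x & sigman m y = sigman n x]].

Definition int_iso_at (x : X) : set (X * int * X) :=
  rel_interiorG (reduction (closure (orbit x)))
                (isotropy (reduction (closure (orbit x)))) `&` isoG_at x.

Definition aperiodic : set X :=
  [set x | ~ exists l p : nat, [/\ (1 <= p)%N, domn (l + p) x &
                                   sigman (l + p) x = sigman l x]].

Definition P0 : set X :=
  [set x | ~ aperiodic x /\
           exists U : set X, [/\ open U, U x & U `&` orbit x = [set x]]].

Definition G_invariant (A : set X) : Prop :=
  forall g, inG g -> A (src g) -> A (rng g).

End DR.

From Pilot Require Import Defs.
From HB Require Import structures.
From mathcomp Require Import all_boot all_order all_algebra.
From mathcomp Require Import all_classical all_reals all_analysis.
From mathcomp Require Import zify.
Set Implicit Arguments.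
Unset Strict Implicit.
Unset Printing Implicit Defensive.

Local Open Scope classical_set_scope.

(* Aperiodicity and eventual periodicity only depend on the orbit, and so does
   being isolated in one's orbit because the sigma^n are local homeomorphisms;
   this gives the invariance.
   At an aperiodic point the isotropy group is {(x,0,x)}, which lies in the open
   unit space Z(X,0,0,X).  If x is isolated in [x] by U, then (Hausdorff) U
   meets the closure of [x] only in x, so every element of Z(U,m,n,U) over that
   closure is isotropy at x.
   Conversely let x be eventually periodic, with period p, and suppose the
   isotropy element (x,p,x) lies in the relative interior of the isotropy.  A
   basic open set Z(U,m,n,V) around it then shows that sigma^n y is periodic for
   every y in [x] near x.  Such a point is a forward iterate of x, hence one of
   the finitely many points sigma^i x (i < l + p); keeping sigma^n y away from
   those that differ from sigma^n x forces sigma^n y = sigma^n x, and then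
   y = x by local injectivity of sigma^n.  So x is in P0. *)

Section Iterates.
Variables (X : topologicalType) (Dom : set X) (sigma : X -> X).
Local Notation dn := (domn Dom sigma).
Local Notation sn := (sigman sigma).
Local Notation orb := (Defs.orbit Dom sigma).

Lemma sigmanD m n x : sn (m + n) x = sn m (sn n x).
Proof. by rewrite /sigman iterD. Qed.

Lemma domnD m n x : dn (m + n) x <-> dn n x /\ dn m (sn n x).
Proof.
split=> [h|[hn hm] j hj].
  by split=> j hj; [apply: h; lia | rewrite /sigman -iterD; apply: h; lia].
case: (ltnP j n) => hjn; first exact: hn.
by rewrite -(subnK hjn) iterD; apply: hm; lia.
Qed.

Lemma domnS n x : dn n.+1 x <-> dn n x /\ Dom (sn n x).
Proof.
split=> [h|[hn hD] j]; first by split; [move=> j /ltnW; exact: h | exact: h].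
by rewrite ltnS leq_eqVlt => /orP[/eqP -> //|]; exact: hn.
Qed.

Lemma domn_le m n x : (m <= n)%N -> dn n x -> dn m x.
Proof. by move=> hmn h j hj; apply: h; apply: leq_trans hmn. Qed.

Lemma orbit_refl x : orb x x.
Proof. by exists 0, 0. Qed.

Lemma orbit_sym x y : orb x y -> orb y x.
Proof. by move=> [i [j [? ? ?]]]; exists j, i. Qed.

Lemma orbit_trans x y z : orb x y -> orb y z -> orb x z.
Proof.
move=> [i [j [hy hx e1]]] [m [n [hz hy' e2]]].
case: (leqP i n) => hin.
- have /domnD[_ hyi] : dn ((n - i) + i) y by rewrite subnK.
  exists m, ((n - i) + j); split=> //.
    by apply/domnD; split=> //; rewrite -e1.
  by rewrite e2 -[in LHS](subnK hin) !sigmanD e1.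
- have hni := ltnW hin.
  have /domnD[_ hyn] : dn ((i - n) + n) y by rewrite subnK.
  exists ((i - n) + m), j; split=> //.
    by apply/domnD; split=> //; rewrite e2.
  by rewrite sigmanD e2 -sigmanD subnK.
Qed.

Lemma inG_orbit g : inG Dom sigma g -> orb (src g) (rng g).
Proof. by move=> [m [n [_ hm hn e]]]; exists m, n. Qed.

Definition eventually_periodic x :=
  exists l p, [/\ (1 <= p)%N, dn (l + p) x & sn (l + p) x = sn l x].

Lemma eventually_periodic_iter x l p : (1 <= p)%N -> sn (l + p) x = sn l x ->
  forall k, exists2 i, (i < l + p)%N & sn k x = sn i x.
Proof.
move=> hp he; elim/ltn_ind=> k IH.
case: (ltnP k (l + p)) => hk; first by exists k.
have [i hi e] : exists2 i, (i < l + p)%N & sn (k - p) x = sn i x by apply: IH; lia.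
exists i => //; rewrite -e -(subnK hk) sigmanD he -sigmanD; congr sn; lia.
Qed.

Lemma eventually_periodic_domn x l p : (1 <= p)%N -> dn (l + p) x ->
  sn (l + p) x = sn l x -> forall k, dn k x.
Proof.
move=> hp hd he k j _; have [i hi] := eventually_periodic_iter hp he j.
by rewrite /sigman => ->; exact: hd.
Qed.

Lemma eventually_periodic_orbit x y :
  orb x y -> eventually_periodic x -> eventually_periodic y.
Proof.
move=> [n [m [hy hx e]]] [l [p [hp hd he]]].
have dx := eventually_periodic_domn hp hd he.
have dy k : dn k y.
  case: (leqP k n) => hk; first exact: domn_le hy.
  rewrite -(subnK (ltnW hk)); apply/domnD; split=> //; rewrite e.
  by have /domnD[] := dx ((k - n) + m).
exists (l + n), p; split=> //.
have -> : l + n + p = (l + p) + n by lia.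
rewrite sigmanD [in RHS]sigmanD e -!sigmanD [(l + p + m)%N]addnC.
by rewrite sigmanD he -sigmanD addnC.
Qed.

Lemma sigman_periodic_mul p t z : sn p z = z -> sn (p * t) z = z.
Proof. by move=> h; elim: t => [|t IH]; rewrite ?muln0 // mulnS sigmanD IH. Qed.

Lemma periodic_orbit_iter x y n p : (1 <= p)%N -> orb x y ->
  sn p (sn n y) = sn n y -> exists k, sn n y = sn k x.
Proof.
move=> hp [i [j [_ _ eij]]] hper.
exists ((p * i + n - i) + j).
have hi : (i <= p * i + n)%N by apply: leq_trans (leq_addr _ _); exact: leq_pmull.
rewrite -(sigman_periodic_mul i hper) -sigmanD -(subnK hi) sigmanD eij -sigmanD.
by congr sn; lia.
Qed.

Lemma aperiodic_invariant : G_invariant Dom sigma (aperiodic Dom sigma).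
Proof.
move=> g /inG_orbit hg hap hper; apply: hap.
exact: eventually_periodic_orbit (orbit_sym hg) hper.
Qed.

End Iterates.

Section Separation.
Variable X : topologicalType.
Hypothesis T1 : accessible_space X.

Lemma open_avoiding_finite (c : X) (f : nat -> X) N :
  exists Q, [/\ open Q, Q c & forall i, (i < N)%N -> f i <> c -> ~ Q (f i)].
Proof.
elim: N => [|N [Q [oQ Qc hQ]]]; first by exists setT; split=> //; exact: openT.
case: (pselect (f N = c)) => hfN.
  exists Q; split=> // i; rewrite ltnS leq_eqVlt => /orP[/eqP -> //|]; exact: hQ.
have [A [oA cA fA]] : exists A, [/\ open A, c \in A & f N \in ~` A].
  by apply: T1; apply/eqP => e; apply: hfN; rewrite e.
exists (Q `&` A); split; [exact: openI | by split=> //; rewrite -in_setE |].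
move=> i; rewrite ltnS leq_eqVlt => /orP[/eqP ->|hi] hf [q a].
  by move: fA; rewrite in_setE; apply.
exact: hQ hi hf q.
Qed.

Lemma closure_isolated (U A : set X) (x : X) :
  open U -> U `&` A `<=` [set x] -> U `&` closure A `<=` [set x].
Proof.
move=> oU hUA b [Ub clb]; apply: contrapT => /eqP hbx.
have [B [oB Bb Bx]] := T1 hbx; rewrite in_setE in Bb.
have [w [Aw [Bw Uw]]] := clb _ (filterI (open_nbhs_nbhs (conj oB Bb))
                                         (open_nbhs_nbhs (conj oU Ub))).
by move: Bx; rewrite -(hUA w (conj Uw Aw)) in_setE => /(_ Bw).
Qed.

End Separation.

Section LocalHomeo.
Variables (X : topologicalType) (Dom : set X) (sigma : X -> X).
Hypothesis LH : local_homeo_between_open Dom sigma.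
Local Notation dn := (domn Dom sigma).
Local Notation sn := (sigman sigma).

Lemma sigma_continuous_at x : Dom x -> {for x, continuous sigma}.
Proof.
move=> Dx; have [_ [_ /(_ x Dx) [U [oU Ux _ _ [cU _]]]]] := LH.
by move: cU; rewrite continuous_open_subspace // => /(_ x); apply; rewrite in_setE.
Qed.

Lemma sigman_continuous_at n x : dn n x -> {for x, continuous (sn n)}.
Proof.
elim: n x => [x _ B|n IH x /domnS[hx hD]]; first exact: filterS.
exact: continuous_comp (IH x hx) (sigma_continuous_at hD).
Qed.

Lemma open_domn n : open (dn n).
Proof.
elim: n => [|n IH]; first by rewrite openE => x _; apply: filterS filterT => y _ k.
rewrite openE => x /domnS[hx hD].
have := sigman_continuous_at hx (open_nbhs_nbhs (conj (proj1 LH) hD)).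
move/(filterI (open_nbhs_nbhs (conj IH hx))).
by apply: filterS => y [hy Dy]; exact/domnS.
Qed.

Lemma open_domn_preimage n (S : set X) : open S -> open (dn n `&` sn n @^-1` S).
Proof.
move=> oS; rewrite openE => x [hx Sx].
have := sigman_continuous_at hx (open_nbhs_nbhs (conj oS Sx)).
move/(filterI (open_nbhs_nbhs (conj (open_domn n) hx))).
by apply: filterS.
Qed.

Lemma sigma_local_open x : Dom x -> exists U, [/\ open U, U x, U `<=` Dom,
  {in U &, injective sigma} & forall W, open W -> W `<=` U -> open (sigma @` W)].
Proof.
move=> Dx; have [_ [_ /(_ x Dx) [U [oU Ux sUD oSU [_ [iU [g [gK sK _ cg]]]]]]]] := LH.
exists U; split=> // W oW sWU; rewrite openE => _ [w Ww <-].
have Uw := sWU w Ww.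
have cgw : {for sigma w, continuous g}.
  by move: cg; rewrite continuous_open_subspace // => /(_ (sigma w)); apply;
    rewrite in_setE; exists w.
have : nbhs (g (sigma w)) W by rewrite gK ?in_setE //; exact: open_nbhs_nbhs.
move/cgw/(filterI (open_nbhs_nbhs (conj oSU (ex_intro2 _ _ w Uw erefl)))).
by apply: filterS => z [hz Wgz]; exists (g z) => //; rewrite sK // in_setE.
Qed.

Lemma sigman_local_open n x : dn n x -> exists U, [/\ open U, U x, U `<=` dn n,
  {in U &, injective (sn n)} & forall W, open W -> W `<=` U -> open (sn n @` W)].
Proof.
elim: n x => [x _|n IH x /domnS[hx hD]].
  exists setT; split; [exact: openT | by [] | by move=> ? ? ? | by [] |].
  move=> W oW _; suff -> : sn 0 @` W = W by [].
  by apply/seteqP; split=> [_ [w ? <-]|z ?]//; exists z.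
have [U1 [oU1 U1x sU1 iU1 mU1]] := IH x hx.
have [V [oV Vx sVD iV mV]] := sigma_local_open hD.
exists (U1 `&` (dn n `&` sn n @^-1` V)); split.
- exact: openI oU1 (open_domn_preimage n oV).
- by [].
- by move=> u [u1 [_ uV]]; apply/domnS; split; [exact: sU1 | exact: sVD].
- move=> u v; rewrite !in_setE => -[u1 [_ uV]] [v1 [_ vV]] e.
  by apply: iU1; rewrite ?in_setE //; apply: iV; rewrite ?in_setE.
- move=> W oW sW.
  have -> : sn n.+1 @` W = sigma @` (sn n @` W).
    apply/seteqP; split=> [_ [w hw <-]|_ [_ [w hw <-] <-]]; last by exists w.
    by exists (sn n w); first exists w.
  apply: mV; first by apply: mU1 => // w /sW [].
  by move=> _ [w /sW[_ [_ ?]] <-].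
Qed.

Definition isolated_in_orbit x :=
  exists U, [/\ open U, U x & U `&` Defs.orbit Dom sigma x = [set x]].

Lemma isolated_in_orbit_trans x y :
  Defs.orbit Dom sigma x y -> isolated_in_orbit x -> isolated_in_orbit y.
Proof.
move=> hxy [U [oU Ux hU]]; have [m [n [hy hx e]]] := hxy.
have [U2 [oU2 U2x sU2 _ mU2]] := sigman_local_open hx.
have [U1 [oU1 U1y _ iU1 _]] := sigman_local_open hy.
pose S := sn n @` (U `&` U2).
have oS : open S by apply: mU2; [exact: openI | by move=> ? []].
have Wy : (U1 `&` (dn m `&` sn m @^-1` S)) y by split=> //; split=> //; exists x.
exists (U1 `&` (dn m `&` sn m @^-1` S)); split=> //.
  exact: openI oU1 (open_domn_preimage m oS).
apply/seteqP; split=> [z [[z1 [dmz [v [vU vU2] ev]]] hz]|z ->]; last first.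
  by split=> //; exact: orbit_refl.
have hzv : Defs.orbit Dom sigma z v by exists n, m; split=> //; exact: sU2.
have : (U `&` Defs.orbit Dom sigma x) v.
  by split=> //; exact: orbit_trans hxy (orbit_trans hz hzv).
rewrite hU => /= vx.
by apply: iU1; rewrite ?in_setE //= e -ev vx.
Qed.

End LocalHomeo.

Section Isotropy.
Variables (X : topologicalType) (Dom : set X) (sigma : X -> X).
Hypotheses (T1 : accessible_space X) (LH : local_homeo_between_open Dom sigma).
Local Notation dn := (domn Dom sigma).
Local Notation sn := (sigman sigma).
Local Notation orb := (Defs.orbit Dom sigma).
Local Notation Z := (Zset Dom sigma).
Local Notation redcl x := (reduction Dom sigma (closure (orb x))).

Lemma Zset_inG U m n V : Z U m n V `<=` inG Dom sigma.
Proof. by move=> g [ek _ hm _ [hn e]]; exists m, n. Qed.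

Lemma Zset_open U m n V : open U -> open V -> openG Dom sigma (Z U m n V).
Proof.
by move=> oU oV; split=> [|g hg]; [exact: Zset_inG | exists U, m, n, V; split].
Qed.

Lemma isoG_at_redcl x : isoG_at Dom sigma x `<=` redcl x.
Proof.
move=> g [hg [_ hs]]; split=> //; rewrite /= hs.
by apply: subset_closure; exact: orbit_refl.
Qed.

Lemma aperiodic_sigman_inj x m n :
  aperiodic Dom sigma x -> dn m x -> dn n x -> sn m x = sn n x -> m = n.
Proof.
move=> hap hm hn e; apply/eqP; rewrite eqn_leq; apply/andP.
split; rewrite leqNgt; apply/negP => hlt; apply: hap; have hle := ltnW hlt.
  by exists n, (m - n); rewrite subnKC // subn_gt0 -e.
by exists m, (n - m); rewrite subnKC // subn_gt0 e.
Qed.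

Lemma aperiodic_int_iso x :
  aperiodic Dom sigma x -> isoG_at Dom sigma x `<=` int_iso_at Dom sigma x.
Proof.
move=> hap [[a k] b] hg; have [[m [n [/= ek hm hn e]]] [ax bx]] := hg.
rewrite /rng /src /= in ax bx; subst a b; have emn := aperiodic_sigman_inj hap hm hn e; subst n.
split=> //; split; first exact: isoG_at_redcl.
exists (Z setT 0 0 setT); split; first exact: Zset_open openT openT.
  by split=> //=; lia.
by move=> [[a k'] b] [[_ _ _ _ [_ /= eab]] hB]; split.
Qed.

Lemma isolated_int_iso x :
  isolated_in_orbit Dom sigma x -> isoG_at Dom sigma x `<=` int_iso_at Dom sigma x.
Proof.
move=> [U [oU Ux hU]] [[a k] b] hg; have [[m [n [ek hm hn e]]] [ax bx]] := hg.
rewrite /rng /src /= in ax bx; subst a b; split=> //; split; first exact: isoG_at_redcl.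
exists (Z U m n U); split; [exact: Zset_open | by [] |].
move=> [[a k'] b] [[_ Ua hma Ub [_ eab]] [hG hcl]]; split=> //.
have bx : b = x.
  by apply: (closure_isolated T1 oU _ (conj Ub hcl)); rewrite hU.
subst b; have : (U `&` orb x) a by split=> //; exists m, n.
by rewrite hU.
Qed.

Lemma P0_invariant : G_invariant Dom sigma (P0 Dom sigma).
Proof.
move=> g /inG_orbit hg [hnap hiso]; split; last exact: isolated_in_orbit_trans hg hiso.
by move=> hap; apply: hnap => hper; apply: hap; exact: eventually_periodic_orbit hg hper.
Qed.

Lemma isotropic_Zset_periodic x U V m n p :
  open U -> open V -> Z U m n V (x, Posz p, x) ->
  Z U m n V `&` redcl x `<=` isotropy (redcl x) ->
  exists W, [/\ open W, W x & forall y, W y -> orb x y -> sn p (sn n y) = sn n y].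
Proof.
move=> oU oV [/= ep Ux hmx Vx [hnx ex]] hsub.
have em : m = (p + n)%N by lia.
have [U1 [oU1 U1x sU1 _ mU1]] := sigman_local_open LH hmx.
pose S := sn m @` (U `&` U1).
have oS : open S by apply: mU1; [exact: openI | by move=> ? []].
exists (V `&` (dn n `&` sn n @^-1` S)); split.
- exact: openI oV (open_domn_preimage LH n oS).
- by split=> //; split=> //; exists x; rewrite ?ex.
move=> y [Vy [hny [a [aU aU1] ea]]] hy.
have hZ : Z U m n V (a, Posz p, y) by split=> //; exact: sU1.
have [_ ya] := hsub _ (conj hZ (conj (Zset_inG hZ) (subset_closure hy))).
rewrite /src /rng /= in ya.
by rewrite -sigmanD -em [in LHS]ya.
Qed.

Lemma eventually_periodic_isolated x : eventually_periodic Dom sigma x ->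
  int_iso_at Dom sigma x = isoG_at Dom sigma x -> isolated_in_orbit Dom sigma x.
Proof.
move=> [l [p [hp hd he]]] hiso.
have hg : inG Dom sigma (x, Posz p, x).
  by exists (l + p)%N, l; split=> //=; [lia | exact: domn_le (leq_addr p l) hd].
have : isoG_at Dom sigma x (x, Posz p, x) by split.
rewrite -hiso => -[[_ [N [[_ oN] Ng hsub]]] _].
have [U [m [n [V [oU oV hZ sZN]]]]] := oN _ Ng.
have [W [oW Wx Wper]] := isotropic_Zset_periodic oU oV hZ
  (fun g '(conj Zg Bg) => hsub g (conj (sZN g Zg) Bg)).
have [_ _ _ _ [hnx _]] := hZ.
have [U3 [oU3 U3x _ iU3 _]] := sigman_local_open LH hnx.
have [Q [oQ Qx hQ]] := open_avoiding_finite T1 (sn n x) (sn ^~ x) (l + p).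
exists (W `&` U3 `&` (dn n `&` sn n @^-1` Q)); split=> //.
  exact: openI (openI oW oU3) (open_domn_preimage LH n oQ).
apply/seteqP; split=> [y [[[Wy U3y] [_ Qy]] hy]|y ->]; last by split=> //; exact: orbit_refl.
have [k ek] := periodic_orbit_iter hp hy (Wper y Wy hy).
have [i hi ei] := eventually_periodic_iter hp he k.
have eyx : sn n y = sn n x.
  case: (pselect (sn i x = sn n x)) => [<-|hne]; first by rewrite ek ei.
  by exfalso; apply: (hQ i hi hne); rewrite -ei -ek.
by apply: iU3; rewrite ?in_setE.
Qed.

End Isotropy.

Theorem lemma4p2 (X : topologicalType) (Dom : set X) (sigma : X -> X) :
  hausdorff_space X -> locally_compact [set: X] ->
  local_homeo_between_open Dom sigma ->
  [/\ G_invariant Dom sigma (aperiodic Dom sigma),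
      G_invariant Dom sigma (P0 Dom sigma) &
      aperiodic Dom sigma `|` P0 Dom sigma =
      [set x | int_iso_at Dom sigma x = isoG_at Dom sigma x]].
Proof.
move=> /hausdorff_accessible T1 _ LH.
split; [exact: aperiodic_invariant | exact: P0_invariant |].
apply/seteqP; split=> x.
- move=> hx; apply/seteqP; split=> [g [] //|].
  by case: hx => [hap|[_ hiso]]; [exact: aperiodic_int_iso | exact: isolated_int_iso].
- move=> /= hiso; case: (pselect (eventually_periodic Dom sigma x)) => hper; last by left.
  by right; split=> [/(_ hper) //|]; exact: eventually_periodic_isolated.
Qed.
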